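(* Let $N_E$ be the number of edges of the random intersection graph $\mathcal G(n,m,p)$, $n,m\ge3$, $p\in(0,1)$, and $\hat p=1-(1-p^2)^m$. Then $$\operatorname{Var}[N_E]=\binom n2\hat p(1-\hat p)+6\binom n3\Big[(1-2p^2+p^3)^m-(1-\hat p)^2\Big],$$ and $$\operatorname{Var}[N_E]\asymp n^2\hat p(1-\hat p)+n^3(1-2p^2+p^3)^m\big[1\wedge(mp^3)\big].$$ In particular, if $mp^3\le1$, then $\operatorname{Var}[N_E]\asymp n^2\hat p(1-\hat p)+n^3mp^3(1-\hat p)^2$.
   Context: Random intersection graph $\mathcal G(n,m,p)$: vertex set $\{v_1,\ldots,v_n\}$, attribute set $\{a_1,\ldots,a_m\}$; each vertex chooses each attribute independently with probability $p$, and two vertices are adjacent iff they chose at least one common attribute. Notation: $a\asymp b$ means $a,b>0$ and $c\,b\le a\le C\,b$ for positive constants $c,C$ not depending on $n,m,p$. *)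

From HB Require Import structures.
From mathcomp Require Import all_boot all_order all_algebra.
From mathcomp Require Import reals.
Set Implicit Arguments.
Unset Strict Implicit.
Unset Printing Implicit Defensive.
Import Order.TTheory GRing.Theory Num.Theory.
Local Open Scope ring_scope.

(* Random intersection graph G(n,m,p) as a finite probability space.
   An outcome w records, for each (vertex v_i, attribute a_k), whether
   v_i chose a_k.  Choices are independent Bernoulli(p). *)
Definition rig_outcome (n m : nat) := {ffun 'I_n * 'I_m -> bool}.

Definition rig_prob (R : realType) (n m : nat) (p : R) (w : rig_outcome n m) : R :=
  \prod_(x : 'I_n * 'I_m) (if w x then p else 1 - p).

Definition rig_adj (n m : nat) (w : rig_outcome n m) (i j : 'I_n) : bool :=
  (i != j) && [exists k : 'I_m, w (i, k) && w (j, k)].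

Definition num_edges (n m : nat) (w : rig_outcome n m) : nat :=
  #|[set e : 'I_n * 'I_n | (e.1 < e.2)%N && rig_adj w e.1 e.2]|.

Definition rig_expect (R : realType) (n m : nat) (p : R)
  (X : rig_outcome n m -> R) : R :=
  \sum_(w : rig_outcome n m) rig_prob p w * X w.

Definition rig_var (R : realType) (n m : nat) (p : R)
  (X : rig_outcome n m -> R) : R :=
  rig_expect p (fun w => (X w - rig_expect p X) ^+ 2).

Definition NE (R : realType) (n m : nat) (w : rig_outcome n m) : R :=
  (num_edges w)%:R.

Definition phat (R : realType) (m : nat) (p : R) : R := 1 - (1 - p ^+ 2) ^+ m.

Definition asymp_by (R : realType) (c C a b : R) : Prop :=
  0 < a /\ 0 < b /\ c * b <= a /\ a <= C * b.

From HB Require Import structures.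
From mathcomp Require Import all_boot all_order all_algebra.
From mathcomp Require Import reals.
From mathcomp Require Import ring lra zify.
Set Implicit Arguments.
Unset Strict Implicit.
Unset Printing Implicit Defensive.
Import Order.TTheory GRing.Theory Num.Theory.
Local Open Scope ring_scope.

(* Write N_E = sum_{i<j} (1 - Z_ij) with Z_ij = prod_k (1 - [v_i and v_j both chose a_k]),
   the indicator that v_i and v_j are not adjacent.  Distinct attributes are independent,
   so E[Z_ij Z_kl] = (1 - 2p^2 + p^|{i,j} U {k,l}|)^m: the covariance of two pairs depends
   only on the size of their union and vanishes for disjoint pairs, and counting ordered
   pairs of pairs by overlap gives the exact variance.  For its order of magnitude, factor
   (1 - p^2)^2 = (1 - 2p^2 + p^3)(1 - x) with x = p^3/(1 + p - p^2), which lies between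
   4p^3/5 and p^3.  The covariance of two pairs sharing a vertex is then
   (1 - 2p^2 + p^3)^m (1 - (1 - x)^m), and Bernoulli's inequality puts 1 - (1 - x)^m
   between min(1, mx)/2 and min(1, mx); if mp^3 <= 1 it also gives (1 - x)^m >= 1/9. *)

Section BernoulliProduct.
Variables (R : comPzRingType) (p : R).

Definition bern_expect {I : finType} (f : {ffun I -> bool} -> R) : R :=
  \sum_(w : {ffun I -> bool}) (\prod_x (if w x then p else 1 - p)) * f w.

Definition bern_cov {I : finType} (f g : {ffun I -> bool} -> R) : R :=
  bern_expect (fun w => f w * g w) - bern_expect f * bern_expect g.

Definition bern_var {I : finType} (f : {ffun I -> bool} -> R) : R :=
  bern_expect (fun w => (f w - bern_expect f) ^+ 2).

Variable I : finType.
Implicit Types (f g : {ffun I -> bool} -> R) (S T : {set I}).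

Lemma bern_expect_prod (F : I -> bool -> R) :
  bern_expect (fun w => \prod_x F x (w x))
  = \prod_x (p * F x true + (1 - p) * F x false).
Proof.
transitivity (\prod_x \sum_(b : bool) (if b then p else 1 - p) * F x b).
  by rewrite bigA_distr_bigA; apply: eq_bigr => w _; rewrite big_split.
by apply: eq_bigr => x _; rewrite big_bool.
Qed.

Lemma bern_expectZ c f : bern_expect (fun w => c * f w) = c * bern_expect f.
Proof. by rewrite /bern_expect mulr_sumr; apply: eq_bigr => w _; rewrite mulrCA. Qed.

Lemma bern_expectD f g :
  bern_expect (fun w => f w + g w) = bern_expect f + bern_expect g.
Proof. by rewrite /bern_expect -big_split; apply: eq_bigr => w _; rewrite mulrDr. Qed.

Lemma bern_expect_sum (J : finType) (P : pred J) (F : J -> {ffun I -> bool} -> R) :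
  bern_expect (fun w => \sum_(j | P j) F j w) = \sum_(j | P j) bern_expect (F j).
Proof.
by rewrite /bern_expect exchange_big; apply: eq_bigr => w _; rewrite mulr_sumr.
Qed.

Lemma eq_bern_expect f g : f =1 g -> bern_expect f = bern_expect g.
Proof. by move=> fg; apply: eq_bigr => w _; rewrite fg. Qed.

Lemma bern_expect_cst c : bern_expect (fun _ : {ffun I -> bool} => c) = c.
Proof.
transitivity (c * bern_expect (fun w : {ffun I -> bool} => \prod_x (fun _ _ => 1) x (w x))).
  by rewrite -bern_expectZ; apply: eq_bern_expect => w; rewrite big1_eq mulr1.
by rewrite (bern_expect_prod (fun _ _ => 1)) big1 ?mulr1 // => x _; rewrite subrKC.
Qed.

Lemma bern_expectB f g :
  bern_expect (fun w => f w - g w) = bern_expect f - bern_expect g.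
Proof.
rewrite -mulN1r -bern_expectZ -bern_expectD.
by apply: eq_bern_expect => w; rewrite mulN1r.
Qed.

Lemma natr_forall_in (w : {ffun I -> bool}) S :
  [forall x in S, w x]%:R = \prod_(x in S) (w x)%:R :> R.
Proof.
case: forall_inP => [wS | /forall_inP]; first by rewrite big1 // => x /wS ->.
by case/forall_inPn => x xS /negbTE wx; rewrite (bigD1 x) //= wx mul0r.
Qed.

Lemma bern_expect_all S :
  bern_expect (fun w => [forall x in S, w x]%:R) = p ^+ #|S|.
Proof.
under eq_bern_expect do rewrite natr_forall_in big_mkcond /=.
rewrite (bern_expect_prod (fun x b => if x \in S then b%:R else 1)).
rewrite -prodr_const (big_mkcond (mem S)) /=.
by apply: eq_bigr => x _; case: (x \in S); rewrite /= ?mulr1 ?mulr0 ?addr0 // subrKC.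
Qed.

Lemma forall_inU (w : {ffun I -> bool}) S T :
  [forall x in S :|: T, w x] = [forall x in S, w x] && [forall x in T, w x].
Proof.
apply/forall_inP/andP => [wST | [/forall_inP wS /forall_inP wT] x].
  by split; apply/forall_inP => x x_in; apply: wST; rewrite inE x_in ?orbT.
by rewrite inE => /orP[/wS | /wT].
Qed.

Lemma forall_in_set2 (v : {ffun I -> bool}) (a b : I) :
  [forall x in [set a; b], v x] = v a && v b.
Proof.
apply/forall_inP/andP => [vab | [va vb] x]; last by rewrite !inE => /orP[] /eqP->.
by split; apply: vab; rewrite !inE eqxx ?orbT.
Qed.

Lemma bern_expect_not_all_mul S T :
  bern_expect (fun w => (1 - [forall x in S, w x]%:R) * (1 - [forall x in T, w x]%:R))
  = 1 - p ^+ #|S| - p ^+ #|T| + p ^+ #|S :|: T|.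
Proof.
rewrite (eq_bern_expect (g := fun w => 1 - [forall x in S, w x]%:R
  - [forall x in T, w x]%:R + [forall x in S :|: T, w x]%:R)).
  by rewrite bern_expectD !bern_expectB bern_expect_cst !bern_expect_all.
move=> w; rewrite forall_inU.
by case: [forall x in S, _]; case: [forall x in T, _]; rewrite /=; ring.
Qed.

Lemma bern_expect_cols (J : finType) (H : J -> {ffun I -> bool} -> R) :
  bern_expect (fun w : {ffun I * J -> bool} => \prod_j H j [ffun i => w (i, j)])
  = \prod_j bern_expect (H j).
Proof.
rewrite /bern_expect bigA_distr_bigA /=.
pose cols (w : {ffun I * J -> bool}) : {ffun J -> {ffun I -> bool}} :=
  [ffun j => [ffun i => w (i, j)]].
have cols_bij : bijective cols.
  exists (fun W : {ffun J -> {ffun I -> bool}} => [ffun x : I * J => W x.2 x.1]).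
    by move=> w; apply/ffunP => -[i j]; rewrite !ffunE.
  by move=> W; apply/ffunP => j; apply/ffunP => i; rewrite !ffunE.
rewrite (reindex cols) /=; last exact: onW_bij.
apply: eq_bigr => w _; rewrite big_split /=; congr (_ * _).
  by rewrite exchange_big pair_big /=; apply: eq_bigr => -[i j] _; rewrite !ffunE.
by apply: eq_bigr => j _; rewrite ffunE.
Qed.

Lemma eq_bern_var f g : f =1 g -> bern_var f = bern_var g.
Proof.
by move=> fg; rewrite /bern_var (eq_bern_expect fg); apply: eq_bern_expect => w; rewrite fg.
Qed.

Lemma bern_var_cov f : bern_var f = bern_cov f f.
Proof.
rewrite /bern_var /bern_cov; set mu := bern_expect f.
rewrite (eq_bern_expect (g := fun w => f w * f w + (- (2 * mu) * f w + mu ^+ 2))).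
  by rewrite !bern_expectD bern_expectZ bern_expect_cst -/mu; ring.
by move=> w; ring.
Qed.

Lemma bern_var_subl c f : bern_var (fun w => c - f w) = bern_var f.
Proof.
rewrite /bern_var bern_expectB bern_expect_cst.
by apply: eq_bern_expect => w; rewrite -[RHS]sqrrN; congr (_ ^+ 2); ring.
Qed.

Lemma bern_cov_sum (J K : finType) (P : pred J) (Q : pred K)
    (F : J -> {ffun I -> bool} -> R) (G : K -> {ffun I -> bool} -> R) :
  bern_cov (fun w => \sum_(j | P j) F j w) (fun w => \sum_(k | Q k) G k w)
  = \sum_(j | P j) \sum_(k | Q k) bern_cov (F j) (G k).
Proof.
rewrite /bern_cov !bern_expect_sum.
under eq_bern_expect do rewrite mulr_suml.
rewrite bern_expect_sum mulr_suml -sumrB; apply: eq_bigr => j _.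
under eq_bern_expect do rewrite mulr_sumr.
by rewrite bern_expect_sum mulr_sumr -sumrB.
Qed.

End BernoulliProduct.

Arguments bern_expect {R} p {I} f.
Arguments bern_cov {R} p {I} f g.
Arguments bern_var {R} p {I} f.

Lemma card_set2U (T : finType) (a b c d : T) : a != b ->
  #|[set a; b] :|: [set c; d]| = (2 + (c \notin [set a; b]) + (d \notin c |: [set a; b]))%N.
Proof.
move=> neq_ab.
have -> : [set a; b] :|: [set c; d] = d |: (c |: [set a; b]).
  by apply/setP => x; rewrite !inE; do 4!case: (_ == _).
by rewrite (cardsU1 d) (cardsU1 c) cards2 neq_ab; lia.
Qed.

Section PairCounting.
Variables (V : nmodType) (n : nat).
Implicit Types (a b c d : 'I_n) (F : nat -> V).

Lemma sum_lt_sym (F : 'I_n -> 'I_n -> V) : (forall a b, F a b = F b a) ->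
  (\sum_(a : 'I_n) \sum_(b : 'I_n | (a < b)%N) F a b) *+ 2
  = \sum_(a : 'I_n) \sum_(b : 'I_n | b != a) F a b.
Proof.
move=> FC; rewrite mulr2n {2}(exchange_big_dep xpredT) //= -big_split /=.
apply: eq_bigr => a _; under [X in _ + X]eq_bigr do rewrite FC.
rewrite [RHS](bigID (fun b => (a < b)%N)) /=.
by congr (_ + _); apply: eq_bigl => b; rewrite -val_eqE /=; case: ltngtP.
Qed.

Lemma sum_neq_notin (S : {set 'I_n}) c k F : c \in S ->
  \sum_(d : 'I_n | d != c) F (k + (d \notin S))%N
  = F k *+ #|S|.-1 + F k.+1 *+ (n - #|S|).
Proof.
move=> cS; rewrite (bigID (mem S)) /=; congr (_ + _).
  rewrite (eq_bigr (fun=> F k)) => [|d /andP[_ ->]]; last by rewrite addn0.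
  rewrite (eq_bigl (mem (S :\ c))) => [|d]; last by rewrite !inE.
  by rewrite sumr_const (cardsD1 c S) cS.
rewrite (eq_bigr (fun=> F k.+1)) => [|d /andP[_ ->]]; last by rewrite addn1.
rewrite (eq_bigl (mem (~: S))) => [|d]; last first.
  by rewrite !inE andb_idl // => /negP dS; apply/eqP => dc; rewrite dc cS in dS.
by rewrite sumr_const cardsCs card_ord setCK.
Qed.

Lemma sum_pairs_setU a b F : a != b ->
  \sum_(c : 'I_n) \sum_(d : 'I_n | d != c) F #|[set a; b] :|: [set c; d]|
  = F 2 *+ 2 + F 3 *+ (4 * (n - 2)) + F 4 *+ ((n - 2) * (n - 3)).
Proof.
move=> ab; have card_ab : #|[set a; b]| = 2%N by rewrite cards2 ab.
under eq_bigr do under eq_bigr do rewrite card_set2U //.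
rewrite (bigID (mem [set a; b])) /=.
rewrite (eq_bigr (fun=> F 2 *+ 1 + F 3 *+ (n - 2))) => [|c c_ab]; last first.
  have -> : c |: [set a; b] = [set a; b] by apply/setUidPr; rewrite sub1set.
  by rewrite c_ab addn0 sum_neq_notin // card_ab.
rewrite [X in _ + X](eq_bigr (fun=> F 3 *+ 2 + F 4 *+ (n - 3))) => [|c c_ab]; last first.
  by rewrite sum_neq_notin ?setU11 // cardsU1 c_ab card_ab.
rewrite [X in _ + X](eq_bigl (mem (~: [set a; b]))) => [|c]; last by rewrite !inE.
rewrite !sumr_const [#|~: _|]cardsCs setCK card_ord card_ab !mulrnDl -!mulrnA.
have -> : (4 * (n - 2) = (n - 2) * 2 + (n - 2) + (n - 2))%N by lia.
by rewrite !mulrnDr !addrA [((n - 3) * _)%N]mulnC.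
Qed.

Lemma sum_neq_cst (x : V) :
  \sum_(a : 'I_n) \sum_(b : 'I_n | b != a) x = x *+ (n * n.-1).
Proof.
rewrite (eq_bigr (fun=> x *+ n.-1)) => [|a _].
  by rewrite sumr_const card_ord -mulrnA mulnC.
rewrite (eq_bigl (mem [set~ a])) => [|b]; last by rewrite !inE.
by rewrite sumr_const cardsC1 card_ord.
Qed.

Lemma sum_lt_pairs_setU F :
  (\sum_(a : 'I_n) \sum_(b : 'I_n | (a < b)%N)
     \sum_(c : 'I_n) \sum_(d : 'I_n | (c < d)%N) F #|[set a; b] :|: [set c; d]|) *+ 4
  = (F 2 *+ 2 + F 3 *+ (4 * (n - 2)) + F 4 *+ ((n - 2) * (n - 3))) *+ (n * n.-1).
Proof.
have set2C (x y : 'I_n) : [set x; y] = [set y; x] by rewrite setUC.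
rewrite -sum_neq_cst -[4%N]/(2 * 2)%N mulrnA sum_lt_sym => [|a b]; last first.
  by rewrite (set2C a).
rewrite -sumrMnl; apply: eq_bigr => a _; rewrite -sumrMnl; apply: eq_bigr => b ba.
rewrite sum_lt_sym => [|c d]; last by rewrite (set2C c).
by rewrite sum_pairs_setU // eq_sym.
Qed.

End PairCounting.

Section EdgeIndicators.
Variables (R : comPzRingType) (p : R) (n m : nat).
Implicit Types (w : rig_outcome n m) (a b c d : 'I_n).

Definition nonadj w a b : R := \prod_(k : 'I_m) (1 - (w (a, k) && w (b, k))%:R).

Definition edge_cov (k : nat) : R :=
  (1 - 2 * p ^+ 2 + p ^+ k) ^+ m - (1 - p ^+ 2) ^+ m ^+ 2.

Lemma nonadjE w a b : nonadj w a b = (~~ [exists k, w (a, k) && w (b, k)])%:R.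
Proof.
case: (boolP [exists k, _]) => [/existsP[k wk] | /existsPn no_k] /=.
  by rewrite /nonadj (bigD1 k) //= wk subrr mul0r.
by rewrite /nonadj big1 // => k _; rewrite (negbTE (no_k k)) subr0.
Qed.

Lemma bern_expect_nonadj_mul a b c d :
  bern_expect p (fun w => nonadj w a b * nonadj w c d)
  = (1 - p ^+ #|[set a; b]| - p ^+ #|[set c; d]| + p ^+ #|[set a; b] :|: [set c; d]|) ^+ m.
Proof.
pose h (v : {ffun 'I_n -> bool}) :=
  (1 - [forall x in [set a; b], v x]%:R) * (1 - [forall x in [set c; d], v x]%:R) : R.
have by_cols : (fun w => nonadj w a b * nonadj w c d)
               =1 (fun w => \prod_k h [ffun i => w (i, k)]).
  by move=> w; rewrite -big_split; apply: eq_bigr => k _; rewrite /h !forall_in_set2 !ffunE.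
by rewrite (eq_bern_expect p by_cols) (bern_expect_cols p (fun=> h)) prodr_const card_ord
  bern_expect_not_all_mul.
Qed.

Lemma bern_expect_nonadj a b :
  bern_expect p (fun w => nonadj w a b) = (1 - p ^+ #|[set a; b]|) ^+ m.
Proof.
have idem : (fun w => nonadj w a b) =1 (fun w => nonadj w a b * nonadj w a b).
  by move=> w; rewrite nonadjE; case: (~~ _); rewrite ?mul1r ?mul0r.
rewrite (eq_bern_expect p idem) bern_expect_nonadj_mul setUid.
by congr (_ ^+ _); ring.
Qed.

Lemma bern_cov_nonadj a b c d : a != b -> c != d ->
  bern_cov p (fun w => nonadj w a b) (fun w => nonadj w c d)
  = edge_cov #|[set a; b] :|: [set c; d]|.
Proof.
move=> ab cd; rewrite /bern_cov bern_expect_nonadj_mul !bern_expect_nonadj.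
rewrite !cards2 ab cd /= /edge_cov expr2; congr (_ ^+ _ - _); ring.
Qed.

Lemma edge_cov4 : edge_cov 4 = 0.
Proof.
rewrite /edge_cov -exprM mulnC exprM.
have -> : 1 - 2 * p ^+ 2 + p ^+ 4 = (1 - p ^+ 2) ^+ 2 by ring.
by rewrite subrr.
Qed.

Lemma num_edgesE w :
  (num_edges w)%:R = \sum_(e : 'I_n * 'I_n | (e.1 < e.2)%N) (1 - nonadj w e.1 e.2) :> R.
Proof.
rewrite /num_edges -sumr_const big_mkcond [RHS]big_mkcond /=.
apply: eq_bigr => -[a b] _; rewrite inE /rig_adj nonadjE /=.
case: ltnP => //= lt_ab; rewrite -val_eqE (ltn_eqF lt_ab) /=.
by case: [exists k, _]; rewrite ?subr0 ?subrr.
Qed.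

Lemma bern_var_num_edges :
  bern_var p (fun w : rig_outcome n m => (num_edges w)%:R) *+ 4
  = (edge_cov 2 *+ 2 + edge_cov 3 *+ (4 * (n - 2))) *+ (n * n.-1).
Proof.
have := sum_lt_pairs_setU n edge_cov; rewrite edge_cov4 mul0rn addr0 => <-.
have split_count w : (num_edges w)%:R = \sum_(e : 'I_n * 'I_n | (e.1 < e.2)%N) 1
                      - \sum_(e : 'I_n * 'I_n | (e.1 < e.2)%N) nonadj w e.1 e.2.
  by rewrite num_edgesE sumrB.
rewrite (eq_bern_var p split_count) bern_var_subl bern_var_cov bern_cov_sum.
congr (_ *+ 4); rewrite [RHS]pair_big_dep /=.
apply: eq_bigr => -[a b] /= lt_ab; rewrite pair_big_dep /=.
apply: eq_bigr => -[c d] /= lt_cd.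
by rewrite bern_cov_nonadj // -val_eqE /= neq_ltn ?lt_ab ?lt_cd.
Qed.

End EdgeIndicators.

Lemma bin2_mul2 n : ('C(n, 2) * 2 = n * n.-1)%N.
Proof. by rewrite -[2%N]/(2`!) bin_ffact ffactnS ffactn1. Qed.

Lemma bin3_mul6 n : ('C(n, 3) * 6 = 'C(n, 2) * 2 * (n - 2))%N.
Proof. by have := bin_ffact n 3; rewrite ffactnSr -bin_ffact => <-. Qed.

Lemma rig_var_NE (R : realType) n m (p : R) :
  rig_var p (@NE R n m) =
    'C(n, 2)%:R * phat m p * (1 - phat m p)
    + 6 * 'C(n, 3)%:R * ((1 - 2 * p ^+ 2 + p ^+ 3) ^+ m - (1 - phat m p) ^+ 2).
Proof.
(* [rig_expect] unfolds to [bern_expect] over the index set 'I_n * 'I_m. *)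
have -> : rig_var p (@NE R n m) = bern_var p (fun w : rig_outcome n m => (num_edges w)%:R).
  by [].
apply: (mulIf (_ : 4%:R != 0)); first by rewrite pnatr_eq0.
rewrite mulr_natr bern_var_num_edges -bin2_mul2.
have -> : 6 * 'C(n, 3)%:R = 2 * 'C(n, 2)%:R * (n - 2)%:R :> R.
  by rewrite -!natrM [(6 * _)%N]mulnC bin3_mul6 [(2 * _)%N]mulnC.
rewrite /edge_cov /phat.
have -> : 1 - 2 * p ^+ 2 + p ^+ 2 = 1 - p ^+ 2 by ring.
ring.
Qed.

Section ExprnBounds.
Variable R : realFieldType.
Implicit Types x p : R.

Lemma bernoulli_ineq x k : -1 <= x -> 1 + k%:R * x <= (1 + x) ^+ k.
Proof.
move=> x_ge; elim: k => [|k IH]; first by rewrite mul0r addr0 expr0.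
have : 0 <= ((1 + x) ^+ k - (1 + k%:R * x)) * (1 + x) by apply: mulr_ge0; lra.
have : 0 <= k%:R * (x * x) by apply: mulr_ge0; [exact: ler0n | nra].
by rewrite exprS -natr1; nra.
Qed.

Lemma one_sub_exprn_le x m : 0 <= x <= 1 ->
  1 - (1 - x) ^+ m <= Num.min 1 (m%:R * x).
Proof.
case/andP => x0 x1; rewrite le_min; apply/andP; split.
  by rewrite lerBlDr lerDl exprn_ge0 // subr_ge0.
by have := bernoulli_ineq m (_ : -1 <= - x); rewrite mulrN; lra.
Qed.

Lemma one_sub_exprn_ge x m : 0 <= x <= 1 ->
  Num.min 1 (m%:R * x) / 2 <= 1 - (1 - x) ^+ m.
Proof.
case/andP => x0 x1.
have mx0 : 0 <= m%:R * x by rewrite mulr_ge0 ?ler0n.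
have u0 : 0 <= (1 - x) ^+ m by rewrite exprn_ge0 // subr_ge0.
have : (1 - x) ^+ m * (1 + m%:R * x) <= 1.
  apply: le_trans (_ : (1 - x) ^+ m * (1 + x) ^+ m <= 1).
    by rewrite ler_wpM2l // bernoulli_ineq //; lra.
  by rewrite -exprMn exprn_ile1 //; nra.
by case: (leP (m%:R * x) 1) => mx1; nra.
Qed.

Lemma exprn_one_sub_ge x m : (3 <= m)%N -> 0 <= x -> m%:R * x <= 1 ->
  1 / 9 <= (1 - x) ^+ m.
Proof.
move=> m3 x0 mx1.
(* Bernoulli's bound 1 - kx is too weak for k = m, but each half of the exponent
   keeps it above 1/3. *)
have half_ge k : (2 * k <= m + 1)%N -> 1 / 3 <= (1 - x) ^+ k.
  move=> km; have := bernoulli_ineq k (_ : -1 <= - x); rewrite mulrN.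
  have : (2 * k)%:R * x <= (m + 1)%:R * x by rewrite ler_wpM2r // ler_nat.
  have : 3%:R * x <= m%:R * x by rewrite ler_wpM2r // ler_nat.
  rewrite !natrM !natrD; lra.
rewrite -(subnKC (_ : m./2 <= m)%N) ?exprD; last by rewrite -divn2 leq_div.
have -> : 1 / 9 = 1 / 3 * (1 / 3) :> R by field.
apply: ler_pM; rewrite ?divr_ge0 ?ler01 ?ler0n //; apply: half_ge; lia.
Qed.

Lemma one_sub_sqr_factor p : 0 < p < 1 ->
  exists2 x, 4 / 5 * p ^+ 3 <= x <= p ^+ 3
           & (1 - p ^+ 2) ^+ 2 = (1 - 2 * p ^+ 2 + p ^+ 3) * (1 - x).
Proof.
case/andP => p0 p1; set d := 1 + p - p ^+ 2.
have d_ge1 : 1 <= d by rewrite /d; nra.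
have d_le : d <= 5 / 4 by have := sqr_ge0 (p - 2^-1); rewrite /d; nra.
have p3_gt0 : 0 < p ^+ 3 by rewrite exprn_gt0.
exists (p ^+ 3 / d).
  by rewrite ler_pdivlMr ?ler_pdivrMr; try lra; apply/andP; split; nra.
by rewrite /d; field; rewrite -/d gt_eqF //; lra.
Qed.

Lemma one_sub_2sqr_cube_gt0 p : 0 < p < 1 -> 0 < 1 - 2 * p ^+ 2 + p ^+ 3.
Proof.
case/andP => p0 p1.
have -> : 1 - 2 * p ^+ 2 + p ^+ 3 = (1 - p) * (1 + p * (1 - p)) by ring.
by rewrite mulr_gt0 ?subr_gt0 //; nra.
Qed.

Lemma min1_bounds (c y z : R) : 0 <= c <= 1 -> c * y <= z <= y ->
  c * Num.min 1 y <= Num.min 1 z <= Num.min 1 y.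
Proof.
case/andP => c0 c1 /andP[zy_lo zy_hi].
have cmin_le1 : c * Num.min 1 y <= c * 1 by rewrite ler_wpM2l // ge_min lexx.
have cmin_ley : c * Num.min 1 y <= c * y by rewrite ler_wpM2l // ge_min lexx orbT.
rewrite !le_min !ge_min lexx zy_hi orbT andbT; apply/andP; split; lra.
Qed.

Lemma exprn_gap_bounds p m : 0 < p < 1 ->
  2 / 5 * ((1 - 2 * p ^+ 2 + p ^+ 3) ^+ m * Num.min 1 (m%:R * p ^+ 3))
  <= (1 - 2 * p ^+ 2 + p ^+ 3) ^+ m - (1 - p ^+ 2) ^+ m ^+ 2
  <= (1 - 2 * p ^+ 2 + p ^+ 3) ^+ m * Num.min 1 (m%:R * p ^+ 3).
Proof.
move=> p01; have [x /andP[x_lo x_hi] sqrE] := one_sub_sqr_factor p01.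
have [p0 p1] := andP p01.
have p3_lt1 : p ^+ 3 < 1 by rewrite exprn_ilt1 //; lra.
have t_ge0 : 0 <= (1 - 2 * p ^+ 2 + p ^+ 3) ^+ m
  by apply/exprn_ge0/ltW/one_sub_2sqr_cube_gt0.
rewrite -exprM mulnC exprM sqrE exprMn; set t := _ ^+ m in t_ge0 *.
have -> : t - t * (1 - x) ^+ m = t * (1 - (1 - x) ^+ m) by ring.
have p3_gt0 : 0 < p ^+ 3 by rewrite exprn_gt0.
have [x0 x1] : 0 <= x /\ x <= 1 by split; lra.
have mx_lo : 4 / 5 * (m%:R * p ^+ 3) <= m%:R * x.
  by rewrite mulrCA ler_wpM2l ?ler0n.
have mx_hi : m%:R * x <= m%:R * p ^+ 3 by rewrite ler_wpM2l ?ler0n.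
have /andP[min_lo min_hi] : 4 / 5 * Num.min 1 (m%:R * p ^+ 3) <= Num.min 1 (m%:R * x)
                            <= Num.min 1 (m%:R * p ^+ 3).
  by apply: min1_bounds; rewrite ?mx_lo ?mx_hi //; apply/andP; split; lra.
have /andP[gap_lo gap_hi] : Num.min 1 (m%:R * x) / 2 <= 1 - (1 - x) ^+ m
                            <= Num.min 1 (m%:R * x).
  by rewrite one_sub_exprn_le ?one_sub_exprn_ge ?x0.
by rewrite mulrCA !ler_wpM2l //; lra.
Qed.

Lemma sqr_exprn_ge_ninth p m : (3 <= m)%N -> 0 < p < 1 -> m%:R * p ^+ 3 <= 1 ->
  (1 - 2 * p ^+ 2 + p ^+ 3) ^+ m / 9 <= (1 - p ^+ 2) ^+ m ^+ 2.
Proof.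
move=> m3 p01 mp3; have [x /andP[x_lo x_hi] sqrE] := one_sub_sqr_factor p01.
have [p0 _] := andP p01.
have x0 : 0 <= x by have := exprn_gt0 3 p0; lra.
have mx1 : m%:R * x <= 1 by apply: le_trans mp3; rewrite ler_wpM2l ?ler0n.
have u_ge : 9^-1 <= (1 - x) ^+ m by rewrite -div1r exprn_one_sub_ge.
rewrite -exprM mulnC exprM sqrE exprMn ler_wpM2l //.
exact/exprn_ge0/ltW/one_sub_2sqr_cube_gt0.
Qed.

End ExprnBounds.

Section BinomialBounds.
Variable R : realFieldType.

Lemma bin2_bounds n : (3 <= n)%N ->
  (n%:R : R) ^+ 2 / 3 <= ('C(n, 2)%:R : R) <= n%:R ^+ 2.
Proof.
move=> n3; have := bin2_mul2 n => bin2E.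
have lo : (n ^ 2 <= 3 * 'C(n, 2))%N by nia.
have hi : ('C(n, 2) <= n ^ 2)%N by nia.
by move: lo hi; rewrite -!(ler_nat R) !natrX !natrM; lra.
Qed.

Lemma bin3_bounds n : (3 <= n)%N ->
  2 / 9 * (n%:R : R) ^+ 3 <= 6 * ('C(n, 3)%:R : R) <= n%:R ^+ 3.
Proof.
move=> n3; have := bin3_mul6 n; rewrite bin2_mul2 => bin3E.
have lo : (2 * n ^ 3 <= 9 * (6 * 'C(n, 3)))%N by nia.
have hi : (6 * 'C(n, 3) <= n ^ 3)%N by nia.
by move: lo hi; rewrite -!(ler_nat R) !natrX !natrM; lra.
Qed.

End BinomialBounds.

Lemma asymp_by_trans (R : realType) (c C c' C' a b d : R) : 0 <= c -> 0 <= C ->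
  asymp_by c C a b -> asymp_by c' C' b d -> asymp_by (c * c') (C * C') a d.
Proof.
move=> c0 C0 [a_gt0 [b_gt0 [ab_lo ab_hi]]] [_ [d_gt0 [bd_lo bd_hi]]].
do 3!split=> //; rewrite -mulrA.
  exact: le_trans (ler_wpM2l c0 bd_lo) ab_lo.
exact: le_trans ab_hi (ler_wpM2l C0 bd_hi).
Qed.

Lemma one_sub_phat (R : realType) m (p : R) : 1 - phat m p = (1 - p ^+ 2) ^+ m.
Proof. by rewrite /phat opprB addrC subrK. Qed.

Lemma phat_in01 (R : realType) m (p : R) : (0 < m)%N -> 0 < p < 1 -> 0 < phat m p < 1.
Proof.
move=> m_gt0 /andP[p0 p1].
have p2_gt0 : 0 < p ^+ 2 by rewrite exprn_gt0.
have p2_lt1 : p ^+ 2 < 1 by rewrite exprn_ilt1 // ltW.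
have s_gt0 : 0 < (1 - p ^+ 2) ^+ m by rewrite exprn_gt0 // subr_gt0.
have s_lt1 : (1 - p ^+ 2) ^+ m < 1 by rewrite exprn_ilt1; [lia | lra | lra].
by rewrite /phat; apply/andP; split; lra.
Qed.

Section Asymptotics.
Variables (R : realType) (n m : nat) (p : R).
Hypotheses (n3 : (3 <= n)%N) (m3 : (3 <= m)%N) (p01 : 0 < p < 1).

Lemma rig_var_NE_asymp :
  asymp_by (4 / 45) 1 (rig_var p (@NE R n m))
    (n%:R ^+ 2 * phat m p * (1 - phat m p)
     + n%:R ^+ 3 * (1 - 2 * p ^+ 2 + p ^+ 3) ^+ m * Num.min 1 (m%:R * p ^+ 3)).
Proof.
have /andP[q_gt0 q_lt1] := phat_in01 (ltnW (ltnW m3)) p01.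
have /andP[gap_lo gap_hi] := exprn_gap_bounds m p01.
have /andP[C2_lo C2_hi] := bin2_bounds R n3.
have /andP[C3_lo C3_hi] := bin3_bounds R n3.
have s_gt0 : 0 < 1 - phat m p by rewrite subr_gt0.
rewrite rig_var_NE one_sub_phat in s_gt0 *.
set q := phat m p in q_gt0 *; set s := (1 - p ^+ 2) ^+ m in s_gt0 gap_lo gap_hi *.
set t := (1 - 2 * p ^+ 2 + p ^+ 3) ^+ m in gap_lo gap_hi *.
set M := Num.min 1 _ in gap_lo gap_hi *.
set C2 := 'C(n, 2)%:R in C2_lo C2_hi *; set C3 := 6 * 'C(n, 3)%:R in C3_lo C3_hi *.
set N := n%:R in C2_lo C2_hi C3_lo C3_hi *.
rewrite -[C2 * q * s]mulrA -[N ^+ 2 * q * s]mulrA -[N ^+ 3 * t * M]mulrA.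
set A := q * s; set G := t - s ^+ 2 in gap_lo gap_hi *.
have A_gt0 : 0 < A by rewrite mulr_gt0.
have N_ge3 : 3 <= N by rewrite (ler_nat R 3).
have N2A_gt0 : 0 < N ^+ 2 * A by rewrite mulr_gt0 // exprn_gt0 //; lra.
have N3_ge0 : 0 <= N ^+ 3 by rewrite exprn_ge0 //; lra.
have t_gt0 : 0 < t by rewrite exprn_gt0 // one_sub_2sqr_cube_gt0.
have M_ge0 : 0 <= M.
  by rewrite le_min ler01 mulr_ge0 ?ler0n ?exprn_ge0 //; case/andP: p01 => /ltW.
have tM_ge0 : 0 <= t * M by rewrite mulr_ge0 // ltW.
have C2A_lo : N ^+ 2 / 3 * A <= C2 * A by rewrite ler_wpM2r // ltW.
have C2A_hi : C2 * A <= N ^+ 2 * A by rewrite ler_wpM2r // ltW.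
have C3G_lo : 2 / 9 * N ^+ 3 * (2 / 5 * (t * M)) <= C3 * G by apply: ler_pM => //; lra.
have C3G_hi : C3 * G <= N ^+ 3 * (t * M) by apply: ler_pM => //; lra.
have N3tM_ge0 : 0 <= N ^+ 3 * (t * M) by rewrite mulr_ge0.
by split; [|split; [|split]]; lra.
Qed.

Lemma rig_var_NE_asymp_sparse : m%:R * p ^+ 3 <= 1 ->
  asymp_by (4 / 45) 9 (rig_var p (@NE R n m))
    (n%:R ^+ 2 * phat m p * (1 - phat m p)
     + n%:R ^+ 3 * m%:R * p ^+ 3 * (1 - phat m p) ^+ 2).
Proof.
move=> mp3; rewrite -[4 / 45]mulr1 -[9]mul1r.
apply: asymp_by_trans rig_var_NE_asymp _; [lra | exact: ler01 |].
have [p0 _] := andP p01.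
have /andP[q_gt0 q_lt1] := phat_in01 (ltnW (ltnW m3)) p01.
have s_gt0 : 0 < 1 - phat m p by rewrite subr_gt0.
have /andP[gap_lo _] := exprn_gap_bounds m p01; rewrite min_r // in gap_lo.
have sqr_lo := sqr_exprn_ge_ninth m3 p01 mp3.
rewrite min_r // one_sub_phat in s_gt0 *.
set q := phat m p in q_gt0 *; set s := (1 - p ^+ 2) ^+ m in s_gt0 gap_lo sqr_lo *.
set t := (1 - 2 * p ^+ 2 + p ^+ 3) ^+ m in gap_lo sqr_lo *.
have n2qs_gt0 : 0 < n%:R ^+ 2 * q * s by rewrite !mulr_gt0 // ltr0n; lia.
have tmp3_ge0 : 0 <= t * (m%:R * p ^+ 3).
  by rewrite !mulr_ge0 ?ler0n ?exprn_ge0 ?ltW // one_sub_2sqr_cube_gt0.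
have n3mp3_ge0 : 0 <= n%:R ^+ 3 * m%:R * p ^+ 3.
  by rewrite !mulr_ge0 ?ler0n ?exprn_ge0 ?ltW.
have sqr_hi : n%:R ^+ 3 * m%:R * p ^+ 3 * s ^+ 2 <= n%:R ^+ 3 * m%:R * p ^+ 3 * t.
  by rewrite ler_wpM2l //; lra.
have sqr_lo' : n%:R ^+ 3 * m%:R * p ^+ 3 * (t / 9) <= n%:R ^+ 3 * m%:R * p ^+ 3 * s ^+ 2.
  by rewrite ler_wpM2l.
by split; [|split; [|split]]; lra.
Qed.

End Asymptotics.

Theorem lemma3p1 (R : realType) :
  (forall (n m : nat) (p : R), (3 <= n)%N -> (3 <= m)%N -> 0 < p < 1 ->
     rig_var p (@NE R n m) =
       'C(n, 2)%:R * phat m p * (1 - phat m p)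
       + 6 * 'C(n, 3)%:R * ((1 - 2 * p ^+ 2 + p ^+ 3) ^+ m - (1 - phat m p) ^+ 2))
  /\ (exists c C : R, 0 < c /\ 0 < C /\
       forall (n m : nat) (p : R), (3 <= n)%N -> (3 <= m)%N -> 0 < p < 1 ->
         asymp_by c C (rig_var p (@NE R n m))
           ((n%:R) ^+ 2 * phat m p * (1 - phat m p)
            + (n%:R) ^+ 3 * (1 - 2 * p ^+ 2 + p ^+ 3) ^+ m
                * Num.min 1 (m%:R * p ^+ 3)))
  /\ (exists c C : R, 0 < c /\ 0 < C /\
       forall (n m : nat) (p : R), (3 <= n)%N -> (3 <= m)%N -> 0 < p < 1 ->
         m%:R * p ^+ 3 <= 1 ->
         asymp_by c C (rig_var p (@NE R n m))
           ((n%:R) ^+ 2 * phat m p * (1 - phat m p)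
            + (n%:R) ^+ 3 * m%:R * p ^+ 3 * (1 - phat m p) ^+ 2)).
Proof.
split; first by move=> n m p _ _ _; exact: rig_var_NE.
split.
  exists (4 / 45), 1; do 2!(split; first lra).
  by move=> n m p n3 m3 p01; exact: rig_var_NE_asymp.
exists (4 / 45), 9; do 2!(split; first lra).
by move=> n m p n3 m3 p01; exact: rig_var_NE_asymp_sparse.
Qed.
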